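(* In the setting below, for all $m,n\in\mathbb{Z}$: (1) The automorphism $w=T_1^mT_2^n$ satisfies $(w(\tau_0),w(\tau_1),w(\tau_2))=(\tau_{m,n},\tau_{m+1,n},\tau_{m+1,n+1})$ and $(w(\alpha_0),w(\alpha_1),w(\alpha_2))=(\alpha_0+3m,\alpha_1+3(n-m),\alpha_2-3n)$; the automorphism $w'=T_1^mT_2^ns_1$ satisfies $(w'(\tau_0),w'(\tau_1),w'(\tau_2))=(\tau_{m,n},\tau_{m,n+1},\tau_{m+1,n+1})$ and $(w'(\alpha_0),w'(\alpha_1),w'(\alpha_2))=(\alpha_0+\alpha_1+3n,-\alpha_1+3(m-n),\alpha_1+\alpha_2-3m)$. (2) With $\varphi_i:=\tau_{i+1}'/\tau_{i+1}-\tau_{i+2}'/\tau_{i+2}+x$, $$(w(\varphi_0),w(\varphi_1),w(\varphi_2))=\Big(\frac{\tau_{m,n}\tau_{m+2,n+1}}{\tau_{m+1,n}\tau_{m+1,n+1}},\ \frac{\tau_{m+1,n}\tau_{m,n+1}}{\tau_{m+1,n+1}\tau_{m,n}},\ \frac{\tau_{m+1,n+1}\tau_{m,n-1}}{\tau_{m,n}\tau_{m+1,n}}\Big),$$ $$(w'(\varphi_0),w'(\varphi_1),w'(\varphi_2))=\Big(\frac{\tau_{m,n}\tau_{m+1,n+2}}{\tau_{m,n+1}\tau_{m+1,n+1}},\ \frac{\tau_{m,n+1}\tau_{m+1,n}}{\tau_{m+1,n+1}\tau_{m,n}},\ \frac{\tau_{m+1,n+1}\tau_{m-1,n}}{\t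au_{m,n}\tau_{m,n+1}}\Big).$$
   Context: Indices mod 3. Let $L$ be the field of rational functions over $\mathbb{C}$ in independent indeterminates $\alpha_0,\alpha_1,x,\tau_0,\tau_1,\tau_2,\tau_0',\tau_1',\tau_2'$, with $\alpha_2:=3-\alpha_0-\alpha_1$ and derivation $'$: $\alpha_i'=0$, $x'=1$, $(\tau_i)'=\tau_i'$, $(\tau_i')'=\tau_i(F_i''+(F_i')^2)$ where $F_j'=\tau_j'/\tau_j$ and $F_i''=-x(F_{i+1}'-F_{i+2}')-(F_i'-F_{i+1}')(F_i'-F_{i+2}')-(\alpha_{i+1}-\alpha_{i+2})/3$. The extended affine Weyl group of type $A^{(1)}_2$ acts on $L$ by differential automorphisms $s_0,s_1,s_2,\pi$ with $s_i(x)=\pi(x)=x$, $s_i(\alpha_i)=-\alpha_i$, $s_i(\alpha_j)=\alpha_j+\alpha_i$ ($j\neq i$), $\pi(\alpha_j)=\alpha_{j+1}$, $s_i(\tau_i)=(\tau_{i+1}'\tau_{i+2}-\tau_{i+1}\tau_{i+2}'+x\tau_{i+1}\tau_{i+2})/\tau_i$, $s_i(\tau_j)=\tau_j$ ($j\ne i$), $\pi(\tau_j)=\tau_{j+1}$. Put $T_1=\pi s_2s_1$, $T_2=s_1\pi s_2$ (composition of automorphisms) and $\tau_{m,n}:=T_1^mT_2^n(\tau_0)\in L$ for $m,n\in\mathbb{Z}$. *)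

From HB Require Import structures.
From mathcomp Require Import all_boot all_order all_algebra.
From mathcomp Require Import fraction.
From mathcomp Require Import mpoly.
From mathcomp Require Import complex.
From mathcomp Require Import reals.

Set Implicit Arguments.
Unset Strict Implicit.
Unset Printing Implicit Defensive.

Import Order.TTheory GRing.Theory Num.Theory.
Local Open Scope ring_scope.

Section Setting.

(* R is the field of real numbers (any realType is isomorphic to it);
   C := R[i] is the field of complex numbers. *)
Variable R : realType.

Definition CC : Type := complex R.

(* Indeterminate k : 'I_9 is: 0 -> alpha_0, 1 -> alpha_1, 2 -> x,
   3+i -> tau_i, 6+i -> tau_i' (i = 0,1,2). *)
Definition L : Type := {fraction {mpoly CC[9]}}.

Definition gen (k : nat) : L := tofrac ('X_(inord k) : {mpoly CC[9]}).
Definition cst (c : CC) : L := tofrac (mpolyC 9 c).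

Definition alpha0 : L := gen 0.
Definition alpha1 : L := gen 1.
Definition xx : L := gen 2.
(* indices mod 3 are elements of 'I_3 with its Z/3Z arithmetic *)
Definition tau (i : 'I_3) : L := gen (3 + i).
Definition taup (i : 'I_3) : L := gen (6 + i).
Definition alpha (i : 'I_3) : L :=
  if val i == 0%N then alpha0 else if val i == 1%N then alpha1
  else 3 - alpha0 - alpha1.

Definition Fp (i : 'I_3) : L := taup i / tau i.
Definition Fpp (i : 'I_3) : L :=
  - xx * (Fp (i + 1) - Fp (i + 2)) - (Fp i - Fp (i + 1)) * (Fp i - Fp (i + 2))
  - (alpha (i + 1) - alpha (i + 2)) / 3.

Definition is_derivation (D : L -> L) : Prop :=
  [/\ forall a b, D (a + b) = D a + D b,
      forall a b, D (a * b) = D a * b + a * D b &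
      forall c, D (cst c) = 0].

Definition derivation_spec (D : L -> L) : Prop :=
  [/\ is_derivation D,
      forall i, D (alpha i) = 0,
      D xx = 1,
      forall i, D (tau i) = taup i &
      forall i, D (taup i) = tau i * (Fpp i + Fp i ^+ 2)].

Definition diff_aut (D : L -> L) (f finv : L -> L) : Prop :=
  [/\ forall a b, f (a + b) = f a + f b,
      forall a b, f (a * b) = f a * f b,
      f 1 = 1 &
      forall c, f (cst c) = cst c] /\
  [/\ cancel f finv,
      cancel finv f &
      forall a, f (D a) = D (f a)].

Definition s_action_spec (i : 'I_3) (s : L -> L) : Prop :=
  [/\ s xx = xx,
      s (alpha i) = - alpha i,
      forall j, j != i -> s (alpha j) = alpha j + alpha i,
      s (tau i) = (taup (i + 1) * tau (i + 2) - tau (i + 1) * taup (i + 2)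
                   + xx * tau (i + 1) * tau (i + 2)) / tau i &
      forall j, j != i -> s (tau j) = tau j].

Definition pi_action_spec (p : L -> L) : Prop :=
  [/\ p xx = xx,
      forall j, p (alpha j) = alpha (j + 1) &
      forall j, p (tau j) = tau (j + 1)].

Definition zpow (f finv : L -> L) (m : int) : L -> L :=
  match m with
  | Posz k => iter k f
  | Negz k => iter k.+1 finv
  end.

Variables (s sinv : 'I_3 -> L -> L) (p pinv : L -> L).

Definition T1 (a : L) : L := p (s 2 (s 1 a)).
Definition T1inv (a : L) : L := sinv 1 (sinv 2 (pinv a)).
Definition T2 (a : L) : L := s 1 (p (s 2 a)).
Definition T2inv (a : L) : L := sinv 2 (pinv (sinv 1 a)).

Definition wmn (m n : int) (a : L) : L := zpow T1 T1inv m (zpow T2 T2inv n a).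
Definition wmn' (m n : int) (a : L) : L := wmn m n (s 1 a).

Definition taumn (m n : int) : L := wmn m n (tau 0).

Definition phi (i : 'I_3) : L :=
  taup (i + 1) / tau (i + 1) - taup (i + 2) / tau (i + 2) + xx.

End Setting.

Arguments gen {R} k.
Arguments cst {R} c.
Arguments alpha0 {R}.
Arguments alpha1 {R}.
Arguments xx {R}.
Arguments tau {R} i.
Arguments taup {R} i.
Arguments alpha {R} i.
Arguments Fp {R} i.
Arguments Fpp {R} i.
Arguments phi {R} i.
Arguments s_action_spec {R} i s.
Arguments pi_action_spec {R} p.

From HB Require Import structures.
From mathcomp Require Import all_boot all_order all_algebra.
From mathcomp Require Import fraction mpoly complex reals.
From mathcomp Require Import ring zify generic_quotient.
Import GRing.Theory Num.Theory.
Local Open Scope ring_scope.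

(* The translations T1 = pi s2 s1 and T2 = s1 pi s2 commute, and on the seed
   tau_0 they give T1 tau_0 = tau_1, T2 tau_1 = tau_2 and T1 T2 tau_0 = tau_2, so
   w = T1^m T2^n maps tau_0, tau_1, tau_2 to tau_{m,n}, tau_{m+1,n}, tau_{m+1,n+1};
   on the alpha_i the translations are shifts by multiples of 3.  The Backlund
   formula s_i(tau_i) = tau_{i+1} tau_{i+2} phi_i / tau_i writes phi_i, and s1(phi_i),
   as ratios of translates of tau_0; the s_i being involutions, the inverse
   translations enter through T2^-1 tau_0 = s2 tau_2 and T1^-1 tau_0 = s1 s2 tau_2.
   Applying the automorphism w (resp. w s1) to these ratios gives (2).
   Identities between automorphisms (s_i^2 = 1, T1 T2 = T2 T1) are checked on
   alpha_0, alpha_1, x, tau_0, tau_1, tau_2 only: the tau_j' are D tau_j, and L is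
   the fraction field of the polynomial ring in the nine generators. *)

(** * Derivations of a field *)

Section Derivations.
Context {F : fieldType} {d : F -> F}.
Hypotheses (derD : {morph d : a b / a + b})
  (derM : forall a b, d (a * b) = d a * b + a * d b).

Lemma der0 : d 0 = 0.
Proof. by apply: (addrI (d 0)); rewrite -derD !addr0. Qed.

Lemma derN a : d (- a) = - d a.
Proof. by apply: (addrI (d a)); rewrite -derD !subrr der0. Qed.

Lemma derB a b : d (a - b) = d a - d b.
Proof. by rewrite derD derN. Qed.

Lemma der1 : d 1 = 0.
Proof. by apply: (addrI (d 1)); rewrite addr0 -[in RHS](mulr1 1) derM mulr1 mul1r. Qed.

Lemma derV b : b != 0 -> d b^-1 = - d b / b ^+ 2.
Proof.
move=> b0; apply: (mulfI b0).
have /eqP : d b * b^-1 + b * d b^-1 = 0 by rewrite -derM mulfV // der1.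
by rewrite addrC addr_eq0 => /eqP ->; field.
Qed.

Lemma der_div a b : b != 0 -> d (a / b) = d a / b - a * d b / b ^+ 2.
Proof. by move=> b0; rewrite derM derV // mulNr mulrN mulrA. Qed.

Lemma logderM a b : a != 0 -> b != 0 -> d (a * b) / (a * b) = d a / a + d b / b.
Proof. by move=> a0 b0; rewrite derM; field; rewrite a0 b0. Qed.

Lemma logder_div a b : a != 0 -> b != 0 -> d (a / b) / (a / b) = d a / a - d b / b.
Proof. by move=> a0 b0; rewrite der_div //; field; rewrite a0 b0. Qed.

End Derivations.

Lemma ord3_addE : ((0 + 1 : 'I_3) = 1) * ((0 + 2 : 'I_3) = 2) * ((1 + 1 : 'I_3) = 2)
  * ((1 + 2 : 'I_3) = 0) * ((2 + 1 : 'I_3) = 0) * ((2 + 2 : 'I_3) = 1).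
Proof. by do !split; apply/eqP. Qed.

Section Ord3.
Implicit Type i : 'I_3.

Lemma ord3_add11 i : i + 1 + 1 = i + 2.
Proof. by rewrite -addrA ord3_addE. Qed.
Lemma ord3_add12 i : i + 1 + 2 = i.
Proof. by rewrite -addrA ord3_addE addr0. Qed.
Lemma ord3_add21 i : i + 2 + 1 = i.
Proof. by rewrite -addrA ord3_addE addr0. Qed.
Lemma ord3_add22 i : i + 2 + 2 = i + 1.
Proof. by rewrite -addrA ord3_addE. Qed.

Lemma ord3_add1_neq i : (i + 1 == i) = false.
Proof. by rewrite -subr_eq0 addrAC subrr add0r. Qed.
Lemma ord3_add2_neq i : (i + 2 == i) = false.
Proof. by rewrite -subr_eq0 addrAC subrr add0r. Qed.

Lemma ord3P i : [\/ i = 0, i = 1 | i = 2].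
Proof.
by case: i => [[|[|[|//]]] ?]; [constructor 1 | constructor 2 | constructor 3]; apply/eqP.
Qed.

End Ord3.

(** * Differential automorphisms of L *)

Lemma fraction_tofrac_div {T : idomainType} (x : {fraction T}) :
  exists n d : T, x = tofrac n / tofrac d.
Proof.
elim/quotW: x => r; exists \n_r, \d_r; unlock tofrac => /=.
rewrite -[_^-1](FracField.pi_inv (Ratio \d_r 1)).
rewrite -[_ * _](FracField.pi_mul (Ratio \n_r 1)) /FracField.invf /FracField.mulf.
by rewrite !numden_Ratio ?oner_neq0 ?denom_ratioP // mulr1 mul1r Ratio_numden.
Qed.

Section DifferentialAutomorphisms.
Context {R : realType} {D : L R -> L R}.
Implicit Types (a b : L R) (f fi g gi : L R -> L R).

Section Morphism.
Context {f fi : L R -> L R}.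
Hypothesis fP : diff_aut D f fi.

Lemma dautD a b : f (a + b) = f a + f b. Proof. by case: fP => [[]]. Qed.
Lemma dautM a b : f (a * b) = f a * f b. Proof. by case: fP => [[]]. Qed.
Lemma daut1 : f 1 = 1. Proof. by case: fP => [[]]. Qed.
Lemma dautC c : f (cst c) = cst c. Proof. by case: fP => [[]]. Qed.
Lemma dautK : cancel f fi. Proof. by case: fP => _ []. Qed.
Lemma dautKV : cancel fi f. Proof. by case: fP => _ []. Qed.
Lemma daut_der a : f (D a) = D (f a). Proof. by case: fP => _ []. Qed.

Lemma daut0 : f 0 = 0.
Proof. by apply: (addrI (f 0)); rewrite -dautD !addr0. Qed.

Lemma dautN a : f (- a) = - f a.
Proof. by apply: (addrI (f a)); rewrite -dautD !subrr daut0. Qed.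

Lemma dautB a b : f (a - b) = f a - f b.
Proof. by rewrite dautD dautN. Qed.

Lemma daut_inj : injective f. Proof. exact: can_inj dautK. Qed.

Lemma daut_eq0 a : (f a == 0) = (a == 0).
Proof. by rewrite -{1}daut0 (inj_eq daut_inj). Qed.

Lemma dautV a : f a^-1 = (f a)^-1.
Proof.
have [->|a0] := eqVneq a 0; first by rewrite invr0 daut0 invr0.
have fa0 : f a != 0 by rewrite daut_eq0.
by apply: (mulfI fa0); rewrite -dautM !mulfV // daut1.
Qed.

Lemma dautf a b : f (a / b) = f a / f b. Proof. by rewrite dautM dautV. Qed.

Lemma dautXn a k : f (a ^+ k) = f a ^+ k.
Proof. by elim: k => [|k IH]; rewrite ?expr0 ?daut1 // !exprS dautM IH. Qed.

Lemma daut_nat k : f k%:R = k%:R.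
Proof. by elim: k => [|k IH]; rewrite ?daut0 // mulrS dautD daut1 IH. Qed.

Lemma daut_int (k : int) : f k%:~R = k%:~R.
Proof. by case: k => k; rewrite ?NegzE ?mulrNz ?dautN daut_nat. Qed.

End Morphism.

Lemma diff_aut_id : diff_aut D id id.
Proof. by split; split. Qed.

Lemma diff_aut_inv {f fi} : diff_aut D f fi -> diff_aut D fi f.
Proof.
move=> fP; have fI := daut_inj fP.
split; split; do ?[exact: dautKV fP | exact: dautK fP].
- by move=> a b; apply: fI; rewrite (dautD fP) !(dautKV fP).
- by move=> a b; apply: fI; rewrite (dautM fP) !(dautKV fP).
- by apply: fI; rewrite (daut1 fP) (dautKV fP).
- by move=> c; apply: fI; rewrite (dautC fP) (dautKV fP).
- by move=> a; apply: fI; rewrite (daut_der fP) !(dautKV fP).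
Qed.

Lemma diff_aut_comp {f fi g gi} : diff_aut D f fi -> diff_aut D g gi ->
  diff_aut D (f \o g) (gi \o fi).
Proof.
move=> fP gP; split; split => /=.
- by move=> a b; rewrite (dautD gP) (dautD fP).
- by move=> a b; rewrite (dautM gP) (dautM fP).
- by rewrite (daut1 gP) (daut1 fP).
- by move=> c; rewrite (dautC gP) (dautC fP).
- by move=> a /=; rewrite (dautK fP) (dautK gP).
- by move=> a /=; rewrite (dautKV gP) (dautKV fP).
- by move=> a; rewrite (daut_der gP) (daut_der fP).
Qed.

Lemma diff_aut_iter {f fi} k : diff_aut D f fi -> exists gi, diff_aut D (iter k f) gi.
Proof.
move=> fP; elim: k => [|k [gi IH]]; first by exists id; exact: diff_aut_id.
by exists (gi \o fi); exact: diff_aut_comp fP IH.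
Qed.

Section IntegerPowers.
Context {f fi : L R -> L R}.
Hypothesis fP : diff_aut D f fi.

Lemma diff_aut_zpow m : exists gi, diff_aut D (zpow f fi m) gi.
Proof.
by case: m => k; [exact: diff_aut_iter k fP | exact: diff_aut_iter k.+1 (diff_aut_inv fP)].
Qed.

Lemma zpowSr m a : zpow f fi (m + 1) a = zpow f fi m (f a).
Proof.
case: m => [k|[|k]].
- by rewrite -PoszD addn1; exact: iterSr.
- by rewrite /= (dautK fP).
- have -> : Negz k.+1 + 1 = Negz k by rewrite !NegzE; lia.
  by change (iter k.+1 fi a = iter k.+2 fi (f a)); rewrite [RHS]iterSr (dautK fP).
Qed.

Lemma zpowBr m a : zpow f fi (m - 1) a = zpow f fi m (fi a).
Proof. by rewrite -{2}[m](subrK 1) zpowSr (dautKV fP). Qed.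

Lemma zpow_comm {g gi} : diff_aut D g gi -> (forall a, g (f a) = f (g a)) ->
  forall n a, zpow f fi n (g a) = g (zpow f fi n a).
Proof.
move=> gP gf.
have gfi a : g (fi a) = fi (g a) by apply: (daut_inj fP); rewrite -gf !(dautKV fP).
have iter_comm h : (forall b, g (h b) = h (g b)) -> forall k a, iter k h (g a) = g (iter k h a).
  by move=> gh; elim=> //= k IH a; rewrite IH gh.
by case=> k; apply: iter_comm.
Qed.

Lemma zpowSl m a : zpow f fi (m + 1) a = f (zpow f fi m a).
Proof. by rewrite zpowSr (zpow_comm fP). Qed.

Lemma zpowBl m a : zpow f fi (m - 1) a = fi (zpow f fi m a).
Proof.
by rewrite zpowBr (zpow_comm (diff_aut_inv fP)) // => b; rewrite (dautK fP) (dautKV fP).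
Qed.

Lemma zpow_affine a c : f a = a + c -> f c = c -> forall m, zpow f fi m a = a + m%:~R * c.
Proof.
move=> fa fc; have fiP := diff_aut_inv fP.
have fic : fi c = c by apply: (daut_inj fP); rewrite (dautKV fP).
have fia : fi a = a - c by apply: (daut_inj fP); rewrite (dautKV fP) (dautB fP) fa fc addrK.
elim/int_rec => [|k IH|k IH]; first by rewrite mul0r addr0.
- by rewrite intS addrC zpowSl IH (dautD fP) (dautM fP) (daut_int fP) fa fc intrD; ring.
- rewrite intS opprD addrC zpowBl IH (dautD fiP) (dautM fiP) (daut_int fiP) fia fic.
  by rewrite intrD intrN; ring.
Qed.

End IntegerPowers.

Section Extensionality.
Hypothesis DP : derivation_spec D.

Lemma eq_diff_aut {f fi g gi} : diff_aut D f fi -> diff_aut D g gi ->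
  (forall k, (k < 6)%N -> f (gen k) = g (gen k)) -> f =1 g.
Proof.
move=> fP gP fg.
have fgX (i : 'I_9) : f (tofrac 'X_i) = g (tofrac 'X_i).
  rewrite -(inord_val i); change (f (gen i) = g (gen i)).
  have [/fg //|i6] := ltnP i 6.
  (* the indeterminates 6, 7, 8 are the tau_j' = D tau_j *)
  have j3 : (i - 6 < 3)%N by case: i i6 => [[|[|[|[|[|[|[|[|[|]]]]]]]]] //].
  have -> : gen i = taup (Ordinal j3) by rewrite /taup /= subnKC.
  by case: DP => _ _ _ <- _; rewrite (daut_der fP) (daut_der gP) fg.
have fgP P : f (tofrac P) = g (tofrac P).
  elim/mpolyind: P => [|c m P _ _ IH]; first by rewrite tofrac0 (daut0 fP) (daut0 gP).
  rewrite tofracD (dautD fP) (dautD gP) IH; congr (_ + _).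
  rewrite -mul_mpolyC tofracM (dautM fP) (dautM gP) -[tofrac _]/(cst c).
  rewrite (dautC fP) (dautC gP) mpolyXE_id rmorph_prod; congr (_ * _).
  rewrite (big_morph f (dautM fP) (daut1 fP)) (big_morph g (dautM gP) (daut1 gP)).
  by apply: eq_bigr => i _; rewrite rmorphXn (dautXn fP) (dautXn gP) fgX.
by move=> a; have [n [d ->]] := fraction_tofrac_div a; rewrite (dautf fP) (dautf gP) !fgP.
Qed.

End Extensionality.

End DifferentialAutomorphisms.

(** * The derivation of L *)

Section Painleve.
Context {R : realType} {D : L R -> L R}.
Hypothesis DP : derivation_spec D.

Lemma D_add : {morph D : a b / a + b}. Proof. by case: DP => [[]]. Qed.
Lemma D_mul a b : D (a * b) = D a * b + a * D b. Proof. by case: DP => [[]]. Qed.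
Lemma D_x : D xx = 1. Proof. by case: DP. Qed.
Lemma D_tau i : D (tau i) = taup i. Proof. by case: DP. Qed.
Lemma D_taup i : D (taup i) = tau i * (Fpp i + Fp i ^+ 2). Proof. by case: DP. Qed.

Lemma gen_neq0 k : (k < 9)%N -> gen k != 0 :> L R.
Proof.
move=> k9; rewrite /gen tofrac_eq0; apply/eqP => X0.
have := @mcoeffXU 9 (CC R) (inord k) (inord k).
by rewrite X0 mcoeff0 eqxx => /eqP; rewrite eq_sym oner_eq0.
Qed.

Lemma tau_neq0 i : tau i != 0 :> L R.
Proof. by apply: gen_neq0; case: i => [[|[|[|]]]]. Qed.

Lemma three_neq0 : 3 != 0 :> L R.
Proof.
rewrite -(rmorph_nat (@tofrac _)) tofrac_eq0 -(rmorph_nat (@mpolyC 9 (CC R))).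
by rewrite mpolyC_eq0 pnatr_eq0.
Qed.

Lemma alpha_add2 i : alpha (i + 2) = 3 - alpha i - alpha (i + 1) :> L R.
Proof. by case: (ord3P i) => ->; rewrite ?add0r ?ord3_addE /alpha /=; ring. Qed.

Lemma alpha2E : alpha 2 = 3 - alpha 0 - alpha 1 :> L R. Proof. by []. Qed.

Lemma Fp_logder j : Fp j = D (tau j) / tau j :> L R.
Proof. by rewrite D_tau. Qed.

Lemma phiE i : phi i = Fp (i + 1) - Fp (i + 2) + xx :> L R.
Proof. by []. Qed.

Lemma D_Fp j : D (Fp j) = Fpp j.
Proof.
rewrite /Fp (der_div D_mul) ?tau_neq0 // D_taup D_tau mulrC mulKf ?tau_neq0 //.
by rewrite -expr2 -expr_div_n addrK.
Qed.

Lemma D_phi i : D (phi i) = alpha i - (Fp (i + 1) + Fp (i + 2) - 2 * Fp i) * phi i.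
Proof.
have alpha_part :
    (alpha i - alpha (i + 1)) / 3 - (alpha (i + 2) - alpha i) / 3 + 1 = alpha i :> L R.
  rewrite -mulrBl alpha_add2.
  have -> : alpha i - alpha (i + 1) - (3 - alpha i - alpha (i + 1) - alpha i)
    = (alpha i - 1) * 3 :> L R by ring.
  by rewrite mulfK ?three_neq0 // subrK.
rewrite phiE D_add (derB D_add) D_x !D_Fp /Fpp.
rewrite ord3_add11 ord3_add12 ord3_add21 ord3_add22 -[alpha i in RHS]alpha_part.
ring.
Qed.

End Painleve.

(* With t_j = tau_j, f_j = phi_j, a_j = alpha_j, S = s1(phi_0) and X = T2(tau_2), these
   are T1 T2 tau_j = T2 T1 tau_j for j = 1, 2 with both sides expanded. *)
Section TranslationIdentities.
Variables (F : fieldType) (t0 t1 t2 f0 f1 a0 a1 S : F).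
Hypothesis SE : S = f0 + a1 / f1.
Hypotheses (t0P : t0 != 0) (t1P : t1 != 0) (t2P : t2 != 0) (f1P : f1 != 0) (SP : S != 0).

Let f0E : f0 = S - a1 / f1. Proof. by rewrite SE addrK. Qed.

Lemma commute_tau1_identity X : X != 0 -> f1 - (a0 + a1) / S != 0 ->
  t1 * t2 * f0 / t0 = t2 * (t2 * X * (f1 - (a0 + a1) / S) / (t2 * t0 * f1 / t1))
     * (S + a0 / (f1 - (a0 + a1) / S)) / X.
Proof.
move=> XP YP; have YSP : f1 * S - (a0 + a1) != 0.
  by rewrite (_ : _ - _ = (f1 - (a0 + a1) / S) * S) ?mulf_neq0 //; field.
by rewrite f0E; field; rewrite t0P t1P t2P f1P SP XP YSP.
Qed.

Lemma commute_tau2_identity : f0 != 0 ->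
  t2 * (t1 * t2 * f0 / t0) * (f1 - a0 / f0) / t1
  = t2 * (t2 * t0 * f1 / t1 * t2 * S / t0) * (f1 - (a0 + a1) / S) / (t2 * t0 * f1 / t1).
Proof.
move=> f0P; have Sf1P : S * f1 - a1 != 0.
  by rewrite (_ : _ - _ = f0 * f1) ?mulf_neq0 // f0E; field.
by move: f0P; rewrite f0E => f0P; field; rewrite t0P t1P t2P f1P SP Sf1P.
Qed.

End TranslationIdentities.

Lemma mulKdivMf (F : fieldType) (a b c u : F) : a != 0 -> b != 0 -> c != 0 ->
  a * (b * c * u / a) / (b * c) = u.
Proof. by move=> a0 b0 c0; field; rewrite a0 b0 c0. Qed.

(** * The action of the extended affine Weyl group *)

Section Actions.
Context {R : realType} {D : L R -> L R} {s sinv : 'I_3 -> L R -> L R} {p pinv : L R -> L R}.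
Hypotheses (DP : derivation_spec D) (sP : forall i, diff_aut D (s i) (sinv i))
  (sA : forall i, s_action_spec i (s i)) (pP : diff_aut D p pinv) (pA : pi_action_spec p).
Implicit Types (i j : 'I_3) (a : L R).

Lemma s_x i : s i xx = xx. Proof. by case: (sA i). Qed.
Lemma s_alpha i : s i (alpha i) = - alpha i. Proof. by case: (sA i). Qed.
Lemma s_alpha_neq i j : j != i -> s i (alpha j) = alpha j + alpha i.
Proof. by case: (sA i) => _ _ + _ _; apply. Qed.
Lemma s_tau_neq i j : j != i -> s i (tau j) = tau j.
Proof. by case: (sA i) => _ _ _ _; apply. Qed.
Lemma p_x : p xx = xx. Proof. by case: pA. Qed.
Lemma p_alpha j : p (alpha j) = alpha (j + 1). Proof. by case: pA. Qed.
Lemma p_tau j : p (tau j) = tau (j + 1). Proof. by case: pA. Qed.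

Lemma daut_Fp {f fi} (fP : diff_aut D f fi) j : f (Fp j) = D (f (tau j)) / f (tau j).
Proof. by rewrite (Fp_logder DP) (dautf fP) (daut_der fP). Qed.

Lemma p_Fp j : p (Fp j) = Fp (j + 1).
Proof. by rewrite (daut_Fp pP) p_tau -(Fp_logder DP). Qed.

Lemma p_phi j : p (phi j) = phi (j + 1).
Proof.
by rewrite !phiE (dautD pP) (dautB pP) !p_Fp p_x ord3_add11 ord3_add12 ord3_add21.
Qed.

Lemma phi_neq0 i : phi i != 0 :> L R.
Proof.
have phi_alpha k : (alpha k : L R) != 0 -> (phi k : L R) != 0.
  apply: contra => /eqP phi0; move: (D_phi DP k).
  by rewrite phi0 (der0 (D_add DP)) mulr0 subr0 => <-.
have [alpha0 alpha1] : (alpha 0 : L R) != 0 /\ (alpha 1 : L R) != 0 by split; apply: gen_neq0.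
case: (ord3P i) => ->; [exact: phi_alpha | exact: phi_alpha |].
by have := phi_alpha 1 alpha1; rewrite -(daut_eq0 pP) p_phi ord3_addE.
Qed.

Lemma s_tau i : s i (tau i) = tau (i + 1) * tau (i + 2) * phi i / tau i.
Proof.
case: (sA i) => _ _ _ -> _; congr (_ / _).
have tau_div j k : tau j * tau k * (taup j / tau j) = taup j * tau k.
  by rewrite mulrAC mulrCA mulfV ?tau_neq0 // mulr1.
by rewrite /phi mulrDr mulrBr tau_div [tau (i + 1) * tau (i + 2)]mulrC tau_div; ring.
Qed.

Lemma s_Fp_neq i j : j != i -> s i (Fp j) = Fp j.
Proof. by move=> ji; rewrite (daut_Fp (sP i)) s_tau_neq // -(Fp_logder DP). Qed.

Lemma s_Fp i : s i (Fp i) = Fp i + alpha i / phi i.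
Proof.
have [t0 f0] := (tau_neq0 (R := R) i, phi_neq0 i).
have t12 := mulf_neq0 (tau_neq0 (R := R) (i + 1)) (tau_neq0 (i + 2)).
have t12f := mulf_neq0 t12 f0.
rewrite (daut_Fp (sP i)) s_tau (logder_div (D_mul DP) _ _ t12f t0).
rewrite (logderM (D_mul DP) _ _ t12 f0) (logderM (D_mul DP)) ?tau_neq0 // -!(Fp_logder DP).
by rewrite (D_phi DP) mulrBl (mulfK f0); ring.
Qed.

Lemma s_phi i : s i (phi i) = phi i.
Proof.
by rewrite !phiE (dautD (sP i)) (dautB (sP i)) s_x !s_Fp_neq ?ord3_add1_neq ?ord3_add2_neq.
Qed.

Lemma s_phi_add1 i : s i (phi (i + 1)) = phi (i + 1) - alpha i / phi i.
Proof.
rewrite [in LHS]phiE ord3_add11 ord3_add12 (dautD (sP i)) (dautB (sP i)) s_x s_Fp.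
by rewrite s_Fp_neq ?ord3_add2_neq // [phi (i + 1)]phiE ord3_add11 ord3_add12; ring.
Qed.

Lemma s_phi_add2 i : s i (phi (i + 2)) = phi (i + 2) + alpha i / phi i.
Proof.
rewrite [in LHS]phiE ord3_add21 ord3_add22 (dautD (sP i)) (dautB (sP i)) s_x s_Fp.
by rewrite s_Fp_neq ?ord3_add1_neq // [phi (i + 2)]phiE ord3_add21 ord3_add22; ring.
Qed.

Lemma s_invol i a : s i (s i a) = a.
Proof.
suff : s i \o s i =1 id by apply.
apply: (eq_diff_aut DP (diff_aut_comp (sP i) (sP i)) diff_aut_id) => k k6 /=.
have s_alpha_invol j : s i (s i (alpha j)) = alpha j.
  have [->|ji] := eqVneq j i; first by rewrite s_alpha (dautN (sP i)) s_alpha opprK.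
  by rewrite s_alpha_neq // (dautD (sP i)) s_alpha_neq // s_alpha addrK.
have s_tau_invol j : s i (s i (tau j)) = tau j.
  have [->|ji] := eqVneq j i; last by rewrite !s_tau_neq.
  have num0 : tau (i + 1) * tau (i + 2) * phi i != 0 :> L R.
    by rewrite !mulf_neq0 ?tau_neq0 ?phi_neq0.
  rewrite s_tau !(dautf (sP i), dautM (sP i)) s_phi s_tau.
  rewrite !s_tau_neq ?ord3_add1_neq ?ord3_add2_neq //.
  by rewrite invf_div mulrC (divfK num0).
case: k k6 => [|[|[|[|[|[|//]]]]]] _.
- exact: s_alpha_invol 0.
- exact: s_alpha_invol 1.
- by rewrite [s i (gen 2)]s_x s_x.
- exact: s_tau_invol 0.
- exact: s_tau_invol 1.
- exact: s_tau_invol 2.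
Qed.

Lemma sinvE i a : sinv i a = s i a.
Proof. by rewrite -{1}[a](s_invol i) (dautK (sP i)). Qed.

Lemma s1_phi0 : s 1 (phi 0) = phi 0 + alpha 1 / phi 1.
Proof. by have := s_phi_add2 1; rewrite !ord3_addE. Qed.

(* s1(phi_0) and s1(phi_2) are left out on purpose: they stay atomic in what follows. *)
Lemma s1E :
  (s 1 (tau 0) = tau 0) * (s 1 (tau 1) = tau 2 * tau 0 * phi 1 / tau 1) * (s 1 (tau 2) = tau 2)
  * (s 1 (phi 1) = phi 1) * (s 1 (alpha 0) = alpha 0 + alpha 1) * (s 1 (alpha 1) = - alpha 1)
  * (s 1 (alpha 2) = alpha 2 + alpha 1) * (s 1 xx = xx).
Proof.
by do !split; rewrite ?s_x ?s_phi ?s_alpha ?s_tau ?ord3_addE ?s_tau_neq ?s_alpha_neq.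
Qed.

Lemma s2E :
  (s 2 (tau 0) = tau 0) * (s 2 (tau 1) = tau 1) * (s 2 (tau 2) = tau 0 * tau 1 * phi 2 / tau 2)
  * (s 2 (phi 0) = phi 0 - alpha 2 / phi 2) * (s 2 (phi 1) = phi 1 + alpha 2 / phi 2)
  * (s 2 (phi 2) = phi 2) * (s 2 (alpha 0) = alpha 0 + alpha 2)
  * (s 2 (alpha 1) = alpha 1 + alpha 2) * (s 2 (alpha 2) = - alpha 2) * (s 2 xx = xx).
Proof.
have := s_phi_add1 2; have := s_phi_add2 2; rewrite !ord3_addE => s2phi1 s2phi0.
by do !split; rewrite ?s_x ?s_phi ?s_alpha ?s_tau ?ord3_addE ?s_tau_neq ?s_alpha_neq.
Qed.

Ltac push_aut := rewrite /T1 /T2 ?(s1E, s2E, p_tau, p_phi, p_alpha, p_x, ord3_addE,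
  dautD (sP _), dautN (sP _), dautM (sP _), dautV (sP _),
  dautD pP, dautN pP, dautM pP, dautV pP).

Lemma diff_aut_T1 : diff_aut D (T1 s p) (T1inv sinv pinv).
Proof. exact: diff_aut_comp pP (diff_aut_comp (sP 2) (sP 1)). Qed.

Lemma diff_aut_T2 : diff_aut D (T2 s p) (T2inv sinv pinv).
Proof. exact: diff_aut_comp (sP 1) (diff_aut_comp pP (sP 2)). Qed.

Lemma T1_tau0 : T1 s p (tau 0) = tau 1. Proof. by push_aut. Qed.
Lemma T1_tau2 : T1 s p (tau 2) = tau 1 * tau 2 * phi 0 / tau 0. Proof. by push_aut. Qed.
Lemma T1_phi1 : T1 s p (phi 1) = phi 2 + alpha 0 / phi 0. Proof. by push_aut. Qed.
Lemma T1_tau1 : T1 s p (tau 1) = tau 1 * T1 s p (tau 2) * T1 s p (phi 1) / tau 2.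
Proof. by push_aut; ring. Qed.
Lemma T1_s1 a : T1 s p (s 1 a) = p (s 2 a). Proof. by rewrite /T1 s_invol. Qed.

Lemma T2_tau0 : T2 s p (tau 0) = s 1 (tau 1). Proof. by rewrite /T2 s2E p_tau ord3_addE. Qed.
Lemma T2_tau1 : T2 s p (tau 1) = tau 2. Proof. by push_aut. Qed.
Lemma T2_tau2 : T2 s p (tau 2) = T2 s p (tau 0) * tau 2 * s 1 (phi 0) / tau 0.
Proof. by push_aut; ring. Qed.
Lemma T2_phi0 : T2 s p (phi 0) = phi 1 - (alpha 0 + alpha 1) / s 1 (phi 0).
Proof. by push_aut. Qed.
Lemma T2_phi2 : T2 s p (phi 2) = s 1 (phi 0). Proof. by push_aut. Qed.

Lemma T1_alpha0 : T1 s p (alpha 0) = alpha 0 + 3.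
Proof. by push_aut; rewrite alpha2E; ring. Qed.
Lemma T1_alpha1 : T1 s p (alpha 1) = alpha 1 - 3.
Proof. by push_aut; rewrite alpha2E; ring. Qed.
Lemma T2_alpha0 : T2 s p (alpha 0) = alpha 0.
Proof. by push_aut; ring. Qed.
Lemma T2_alpha1 : T2 s p (alpha 1) = alpha 1 + 3.
Proof. by push_aut; rewrite alpha2E; ring. Qed.

Lemma T1T2_tau0 : T1 s p (T2 s p (tau 0)) = tau 2.
Proof. by rewrite T2_tau0 T1_s1 s2E p_tau ord3_addE. Qed.

Lemma T1T2_tau1 : T1 s p (T2 s p (tau 1)) = T2 s p (T1 s p (tau 1)).
Proof.
have T2P := diff_aut_T2.
rewrite T2_tau1 T1_tau1 T1_tau2 T1_phi1.
rewrite !(T2_tau1, T2_phi2, T2_phi0, T2_tau0, T2_alpha0, dautM T2P, dautV T2P, dautD T2P) s1E.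
have Y0 : phi 1 - (alpha 0 + alpha 1) / s 1 (phi 0) != 0.
  by rewrite -T2_phi0 (daut_eq0 T2P) phi_neq0.
have X0 : T2 s p (tau 2) != 0 by rewrite (daut_eq0 T2P) tau_neq0.
have S0 : s 1 (phi 0) != 0 by rewrite (daut_eq0 (sP 1)) phi_neq0.
exact: commute_tau1_identity s1_phi0 (tau_neq0 0) (tau_neq0 1) (tau_neq0 2) (phi_neq0 1) S0 _
  X0 Y0.
Qed.

Lemma T1T2_tau2 : T1 s p (T2 s p (tau 2)) = T2 s p (T1 s p (tau 2)).
Proof.
have [T1P T2P] := (diff_aut_T1, diff_aut_T2).
rewrite T2_tau2 T1_tau2 !(dautM T1P, dautV T1P, dautM T2P, dautV T2P) T1T2_tau0 T1_tau0 T1_s1.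
rewrite T1_tau2 T2_tau1 T2_phi0 T2_tau2 T2_tau0 s1E s2E.
rewrite !(p_phi, p_alpha, dautD pP, dautN pP, dautM pP, dautV pP) !ord3_addE.
have S0 : s 1 (phi 0) != 0 by rewrite (daut_eq0 (sP 1)) phi_neq0.
exact: commute_tau2_identity s1_phi0 (tau_neq0 0) (tau_neq0 1) (tau_neq0 2) (phi_neq0 1) S0
  (phi_neq0 0).
Qed.

Lemma T1_x : T1 s p xx = xx. Proof. by push_aut. Qed.
Lemma T2_x : T2 s p xx = xx. Proof. by push_aut. Qed.

Lemma T1T2_comm a : T1 s p (T2 s p a) = T2 s p (T1 s p a).
Proof.
have [T1P T2P] := (diff_aut_T1, diff_aut_T2).
suff : T1 s p \o T2 s p =1 T2 s p \o T1 s p by apply.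
apply: (eq_diff_aut DP (diff_aut_comp T1P T2P) (diff_aut_comp T2P T1P)) => k k6 /=.
case: k k6 => [|[|[|[|[|[|//]]]]]] _.
- change (gen 0) with (alpha 0 : L R).
  by rewrite T2_alpha0 T1_alpha0 (dautD T2P) T2_alpha0 (daut_nat T2P).
- change (gen 1) with (alpha 1 : L R).
  rewrite T2_alpha1 T1_alpha1 (dautD T1P) (dautB T2P) T1_alpha1 T2_alpha1.
  by rewrite (daut_nat T1P) (daut_nat T2P) subrK addrK.
- by change (gen 2) with (xx : L R); rewrite T1_x T2_x T1_x.
- by change (gen 3) with (tau 0 : L R); rewrite T1T2_tau0 T1_tau0 T2_tau1.
- exact: T1T2_tau1.
- exact: T1T2_tau2.
Qed.

Lemma T1inv_T2 a : T1inv sinv pinv (T2 s p a) = T2 s p (T1inv sinv pinv a).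
Proof.
have T1P := diff_aut_T1.
by apply: (daut_inj T1P); rewrite (dautKV T1P) T1T2_comm (dautKV T1P).
Qed.

Lemma pinv_tau0 : pinv (tau 0) = tau 2.
Proof. by rewrite -(dautK pP (tau 2)) p_tau ord3_addE. Qed.

Lemma T2inv_tau0 : T2inv sinv pinv (tau 0) = s 2 (tau 2).
Proof. by rewrite /T2inv !sinvE s1E pinv_tau0. Qed.

Lemma T1inv_tau0 : T1inv sinv pinv (tau 0) = s 1 (s 2 (tau 2)).
Proof. by rewrite /T1inv !sinvE pinv_tau0. Qed.

Lemma phi0_ratio : phi 0 = tau 0 * T1 s p (T1 s p (T2 s p (tau 0)))
  / (T1 s p (tau 0) * T1 s p (T2 s p (tau 0))).
Proof. by rewrite T1T2_tau0 T1_tau0 T1_tau2 mulKdivMf ?tau_neq0. Qed.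

Lemma phi1_ratio : phi 1 = T1 s p (tau 0) * T2 s p (tau 0) / (T1 s p (T2 s p (tau 0)) * tau 0).
Proof. by rewrite T1T2_tau0 T1_tau0 T2_tau0 s1E mulKdivMf ?tau_neq0. Qed.

Lemma phi2_ratio :
  phi 2 = T1 s p (T2 s p (tau 0)) * T2inv sinv pinv (tau 0) / (tau 0 * T1 s p (tau 0)).
Proof. by rewrite T1T2_tau0 T1_tau0 T2inv_tau0 s2E mulKdivMf ?tau_neq0. Qed.

Lemma s1_phi0_ratio : s 1 (phi 0) = tau 0 * T2 s p (T1 s p (T2 s p (tau 0)))
  / (T2 s p (tau 0) * T1 s p (T2 s p (tau 0))).
Proof.
have W0 : T2 s p (tau 0) != 0 by rewrite (daut_eq0 diff_aut_T2) tau_neq0.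
by rewrite T1T2_tau0 T2_tau2 mulKdivMf ?tau_neq0.
Qed.

Lemma s1_phi1_ratio :
  s 1 (phi 1) = T2 s p (tau 0) * T1 s p (tau 0) / (T1 s p (T2 s p (tau 0)) * tau 0).
Proof. by rewrite s_phi [_ * T1 s p _]mulrC -phi1_ratio. Qed.

Lemma s1_phi2_ratio : s 1 (phi 2) = T1 s p (T2 s p (tau 0)) * T1inv sinv pinv (tau 0)
  / (tau 0 * T2 s p (tau 0)).
Proof.
have W0 : T2 s p (tau 0) != 0 by rewrite (daut_eq0 diff_aut_T2) tau_neq0.
rewrite T1T2_tau0 T1inv_tau0 s2E !(dautM (sP 1), dautV (sP 1)) -T2_tau0.
by rewrite !s1E mulKdivMf ?tau_neq0.
Qed.

(** * The translates tau_{m,n} *)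

Local Notation w := (wmn s sinv p pinv).
Local Notation w' := (wmn' s sinv p pinv).
Local Notation tt := (taumn s sinv p pinv).

Lemma w_T1 m n a : w m n (T1 s p a) = w (m + 1) n a.
Proof.
have [T1P T2P] := (diff_aut_T1, diff_aut_T2).
by rewrite /wmn (zpow_comm T2P T1P T1T2_comm) -(zpowSr T1P).
Qed.

Lemma w_T1inv m n a : w m n (T1inv sinv pinv a) = w (m - 1) n a.
Proof.
have [T1P T2P] := (diff_aut_T1, diff_aut_T2).
by rewrite /wmn (zpow_comm T2P (diff_aut_inv T1P) T1inv_T2) -(zpowBr T1P).
Qed.

Lemma w_T2 m n a : w m n (T2 s p a) = w m (n + 1) a.
Proof. by rewrite /wmn -(zpowSr diff_aut_T2). Qed.

Lemma w_T2inv m n a : w m n (T2inv sinv pinv a) = w m (n - 1) a.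
Proof. by rewrite /wmn -(zpowBr diff_aut_T2). Qed.

Lemma diff_aut_w m n : exists wi, diff_aut D (w m n) wi.
Proof.
have [g1 g1P] := diff_aut_zpow diff_aut_T1 m; have [g2 g2P] := diff_aut_zpow diff_aut_T2 n.
by exists (g2 \o g1); exact: diff_aut_comp g1P g2P.
Qed.

Lemma w_alpha m n :
  [/\ w m n (alpha 0) = alpha 0 + 3 * m%:~R,
      w m n (alpha 1) = alpha 1 + 3 * (n - m)%:~R &
      w m n (alpha 2) = alpha 2 - 3 * n%:~R].
Proof.
have [T1P T2P] := (diff_aut_T1, diff_aut_T2).
have [wi wP] := diff_aut_w m n; have [zi zP] := diff_aut_zpow T1P m.
have w0 : w m n (alpha 0) = alpha 0 + 3 * m%:~R.
  rewrite /wmn (zpow_affine T2P _ 0) ?T2_alpha0 ?addr0 ?(daut0 T2P) // mulr0 addr0.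
  by rewrite (zpow_affine T1P _ 3) ?T1_alpha0 ?(daut_nat T1P) // mulrC.
have w1 : w m n (alpha 1) = alpha 1 + 3 * (n - m)%:~R.
  rewrite /wmn (zpow_affine T2P _ 3) ?T2_alpha1 ?(daut_nat T2P) //.
  rewrite (dautD zP) (dautM zP) (daut_int zP) (daut_nat zP).
  rewrite (zpow_affine T1P _ (-3)) ?T1_alpha1 ?(dautN T1P) ?(daut_nat T1P) // intrB.
  by ring.
split=> //; rewrite alpha2E !(dautB wP) (daut_nat wP) w0 w1 intrB; ring.
Qed.

Lemma w_tau m n :
  [/\ w m n (tau 0) = tt m n,
      w m n (tau 1) = tt (m + 1) n &
      w m n (tau 2) = tt (m + 1) (n + 1)].
Proof. by split; rewrite -?T1_tau0 -?T1T2_tau0 ?w_T1 ?w_T2. Qed.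

Lemma w'_tau m n :
  [/\ w' m n (tau 0) = tt m n,
      w' m n (tau 1) = tt m (n + 1) &
      w' m n (tau 2) = tt (m + 1) (n + 1)].
Proof.
rewrite /wmn' -T2_tau0 w_T2 !s1E.
by case: (w_tau m n) => w0 _ w2; split.
Qed.

Lemma w'_alpha m n :
  [/\ w' m n (alpha 0) = alpha 0 + alpha 1 + 3 * n%:~R,
      w' m n (alpha 1) = - alpha 1 + 3 * (m - n)%:~R &
      w' m n (alpha 2) = alpha 1 + alpha 2 - 3 * m%:~R].
Proof.
have [wi wP] := diff_aut_w m n; case: (w_alpha m n) => w0 w1 w2.
by rewrite /wmn' !s1E !(w0, w1, w2, dautN wP, dautD wP) !intrB; split; ring.
Qed.

Lemma w_phi m n :
  [/\ w m n (phi 0) = tt m n * tt (m + 2) (n + 1) / (tt (m + 1) n * tt (m + 1) (n + 1)),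
      w m n (phi 1) = tt (m + 1) n * tt m (n + 1) / (tt (m + 1) (n + 1) * tt m n) &
      w m n (phi 2) = tt (m + 1) (n + 1) * tt m (n - 1) / (tt m n * tt (m + 1) n)].
Proof.
have [wi wP] := diff_aut_w m n.
rewrite phi0_ratio phi1_ratio phi2_ratio !(dautM wP, dautV wP) !(w_T1, w_T2, w_T2inv).
by rewrite -[m + 1 + 1]addrA.
Qed.

Lemma w'_phi m n :
  [/\ w' m n (phi 0) = tt m n * tt (m + 1) (n + 2) / (tt m (n + 1) * tt (m + 1) (n + 1)),
      w' m n (phi 1) = tt m (n + 1) * tt (m + 1) n / (tt (m + 1) (n + 1) * tt m n) &
      w' m n (phi 2) = tt (m + 1) (n + 1) * tt (m - 1) n / (tt m n * tt m (n + 1))].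
Proof.
have [wi wP] := diff_aut_w m n.
rewrite /wmn' s1_phi0_ratio s1_phi1_ratio s1_phi2_ratio !(dautM wP, dautV wP).
by rewrite !(w_T1, w_T2, w_T1inv) -[n + 1 + 1]addrA.
Qed.

End Actions.

Theorem proposition4p1 (R : realType) (D : L R -> L R)
  (s sinv : 'I_3 -> L R -> L R) (p pinv : L R -> L R) :
  derivation_spec D ->
  (forall i, diff_aut D (s i) (sinv i)) ->
  (forall i, s_action_spec i (s i)) ->
  diff_aut D p pinv -> pi_action_spec p ->
  let tt := taumn s sinv p pinv in
  let w := wmn s sinv p pinv in
  let w' := wmn' s sinv p pinv in
  forall m n : int,
  (* (1) *)
  [/\ w m n (tau 0) = tt m n,
      w m n (tau 1) = tt (m + 1) n &
      w m n (tau 2) = tt (m + 1) (n + 1)] /\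
  [/\ w m n (alpha 0) = alpha 0 + 3 * m%:~R,
      w m n (alpha 1) = alpha 1 + 3 * (n - m)%:~R &
      w m n (alpha 2) = alpha 2 - 3 * n%:~R] /\
  [/\ w' m n (tau 0) = tt m n,
      w' m n (tau 1) = tt m (n + 1) &
      w' m n (tau 2) = tt (m + 1) (n + 1)] /\
  [/\ w' m n (alpha 0) = alpha 0 + alpha 1 + 3 * n%:~R,
      w' m n (alpha 1) = - alpha 1 + 3 * (m - n)%:~R &
      w' m n (alpha 2) = alpha 1 + alpha 2 - 3 * m%:~R] /\
  (* (2) *)
  [/\ w m n (phi 0) = tt m n * tt (m + 2) (n + 1) / (tt (m + 1) n * tt (m + 1) (n + 1)),
      w m n (phi 1) = tt (m + 1) n * tt m (n + 1) / (tt (m + 1) (n + 1) * tt m n) &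
      w m n (phi 2) = tt (m + 1) (n + 1) * tt m (n - 1) / (tt m n * tt (m + 1) n)] /\
  [/\ w' m n (phi 0) = tt m n * tt (m + 1) (n + 2) / (tt m (n + 1) * tt (m + 1) (n + 1)),
      w' m n (phi 1) = tt m (n + 1) * tt (m + 1) n / (tt (m + 1) (n + 1) * tt m n) &
      w' m n (phi 2) = tt (m + 1) (n + 1) * tt (m - 1) n / (tt m n * tt m (n + 1))].
Proof.
move=> DP sP sA pP pA tt w w' m n.
split; first exact: (w_tau DP sP sA pP pA).
split; first exact: (w_alpha DP sP sA pP pA).
split; first exact: (w'_tau DP sP sA pP pA).
split; first exact: (w'_alpha DP sP sA pP pA).
by split; [exact: (w_phi DP sP sA pP pA) | exact: (w'_phi DP sP sA pP pA)].
Qed.
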